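(* Let $\gamma$ be a quasiorder on a set $A$ and let $\alpha$ be a half-space on $A$ with $\gamma\subseteq\alpha$. Then there exists a half-space $\tau$ on $A$ such that $\gamma\subseteq\tau\subseteq\alpha$ and $\tau\cap\tau^{-1}=\gamma\cap\gamma^{-1}$.
   Context: A quasiorder on $A$ is a reflexive and transitive relation; $\Delta_A=\{(a,a)\mid a\in A\}$. A quasiorder $\alpha$ on $A$ is a half-space if there is a quasiorder $\beta$ on $A$ with $\alpha\cup\beta=A\times A$ and $\alpha\cap\beta=\Delta_A$. *)

Definition quasiorder {A : Type} (r : A -> A -> Prop) : Prop :=
  (forall a, r a a) /\ (forall a b c, r a b -> r b c -> r a c).

Definition half_space {A : Type} (alpha : A -> A -> Prop) : Prop :=
  quasiorder alpha /\
  exists beta : A -> A -> Prop,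
    quasiorder beta /\
    (forall a b, alpha a b \/ beta a b) /\
    (forall a b, (alpha a b /\ beta a b) <-> a = b).

From mathcomp Require Import all_boot.
From mathcomp Require Import boolp classical_sets.
Set Implicit Arguments.
Unset Strict Implicit.
Unset Printing Implicit Defensive.
Local Open Scope classical_set_scope.

(* Among the quasiorders tau with gamma <= tau <= alpha whose symmetric
   part lies in gamma, Zorn's lemma gives a maximal one.  Maximality makes
   tau total on alpha: if alpha u v but not tau v u, the quasiorder generated
   by tau and (u, v) is still such a relation, so it equals tau and tau u v.
   A quasiorder inside a half-space alpha that is total on alpha is itself a
   half-space: its complement is the diagonal together with the pairs outside
   tau, whose transitivity reduces to that of the complement of alpha. *)

Lemma Zorn_bigcup_above (T : Type) (P : set (set T)) (X0 : set T) :
  P X0 ->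
  (forall F : set (set T), F `<=` P -> F !=set0 -> total_on F subset ->
    P (\bigcup_(X in F) X)) ->
  exists M, [/\ P M, X0 `<=` M & forall Y, P Y -> M `<=` Y -> Y `<=` M].
Proof.
move=> PX0 Pchain.
(* Shifting the family by X0 puts the union of the empty chain, set0, in it. *)
have [M [PM maxM]] :
    exists M, P (X0 `|` M) /\ forall Y, M `<` Y -> ~ P (X0 `|` Y).
  apply: Zorn_bigcup => F FP Ftot.
  have [->|/set0P[X1 FX1]] := eqVneq F set0; first by rewrite bigcup_set0 setU0.
  rewrite -bigcupUr; last by exists X1.
  rewrite -(bigcup_image F (setU X0) id); apply: Pchain.
  - by move=> _ [X FX <-]; exact: FP.
  - by exists (X0 `|` X1), X1.
  - move=> _ _ [X FX <-] [Y FY <-].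
    by have [XY|YX] := Ftot X Y FX FY; [left|right]; exact: setUS.
exists (X0 `|` M); split=> //.
move=> Y PY MY; apply: contrapT => YM.
apply: (maxM Y); last by rewrite (setUidr (subset_trans (@subsetUl _ X0 M) MY)).
split; first by move=> x Mx; apply: MY; right.
by move=> YsubM; apply: YM => y Yy; right; apply: YsubM.
Qed.

Lemma bigcup_chain2 (T : Type) (F : set (set T)) (p q : T) :
  total_on F subset ->
  (\bigcup_(X in F) X) p -> (\bigcup_(X in F) X) q ->
  exists2 X, F X & X p /\ X q.
Proof.
move=> Ftot; case=> X FX Xp; case=> Y FY Yq.
have [XY|YX] := Ftot X Y FX FY.
- by exists Y => //; split=> //; apply: XY.
- by exists X => //; split=> //; apply: YX.
Qed.

Section Adjoin.
Variables (A : Type) (tau : A -> A -> Prop) (u v : A).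
Hypothesis tau_qo : quasiorder tau.

Definition adjoin (a b : A) : Prop := tau a b \/ (tau a u /\ tau v b).

Lemma adjoin_pair : adjoin u v.
Proof. by right; split; apply: tau_qo.1. Qed.

Lemma quasiorder_adjoin : quasiorder adjoin.
Proof.
have [refl trans] := tau_qo; split=> [a|a b c]; first by left.
case=> [ab|[au vb]] [bc|[bu vc]].
- by left; apply: trans ab bc.
- by right; split=> //; apply: trans ab bu.
- by right; split=> //; apply: trans vb bc.
- by right.
Qed.

Lemma adjoin_sub (alpha : A -> A -> Prop) : quasiorder alpha ->
  (forall a b, tau a b -> alpha a b) -> alpha u v ->
  forall a b, adjoin a b -> alpha a b.
Proof.
move=> [_ trans] tau_alpha auv a b [//|[au vb]]; first exact: tau_alpha.
exact: trans (tau_alpha _ _ au) (trans _ _ _ auv (tau_alpha _ _ vb)).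
Qed.

Lemma adjoin_sym a b :
  ~ tau v u -> adjoin a b -> adjoin b a -> tau a b /\ tau b a.
Proof.
have [_ trans] := tau_qo.
move=> nvu [ab|[au vb]] [ba|[bu va]] //; exfalso; apply: nvu.
- exact: trans va (trans _ _ _ ab bu).
- exact: trans vb (trans _ _ _ ba au).
- exact: trans vb bu.
Qed.

End Adjoin.

Section Admissible.
Variables (A : Type) (gamma alpha : A -> A -> Prop).

Definition admissible (tau : A -> A -> Prop) : Prop :=
  [/\ quasiorder tau, forall a b, tau a b -> alpha a b
    & forall a b, tau a b -> tau b a -> gamma a b].

Lemma admissible_bigcup (F : set (set (A * A))) :
  (forall X, F X -> admissible (fun a b => X (a, b))) -> F !=set0 ->
  total_on F subset -> admissible (fun a b => (\bigcup_(X in F) X) (a, b)).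
Proof.
move=> FP [X0 FX0] Ftot; split; [split|..].
- by move=> a; exists X0 => //; have [[refl _] _ _] := FP X0 FX0; apply: refl.
- move=> a b c ab bc; have [X FX [Xab Xbc]] := bigcup_chain2 Ftot ab bc.
  by exists X => //; have [[_ trans] _ _] := FP X FX; apply: trans Xab Xbc.
- by move=> a b [X FX Xab]; have [_ sub _] := FP X FX; apply: sub.
- move=> a b ab ba; have [X FX [Xab Xba]] := bigcup_chain2 Ftot ab ba.
  by have [_ _ sym] := FP X FX; apply: sym.
Qed.

Lemma exists_maximal_admissible : quasiorder gamma ->
  (forall a b, gamma a b -> alpha a b) ->
  exists tau, [/\ admissible tau, forall a b, gamma a b -> tau a b
    & forall sigma, admissible sigma ->
        (forall a b, tau a b -> sigma a b) -> forall a b, sigma a b -> tau a b].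
Proof.
move=> gamma_qo gamma_alpha.
have [|F|M [PM gammaM maxM]] :=
  @Zorn_bigcup_above _ (fun X => admissible (fun a b => X (a, b)))
                       (fun p => gamma p.1 p.2).
- by split.
- exact: admissible_bigcup.
exists (fun a b => M (a, b)); split=> [//|a b|sigma Psigma Msigma a b].
- exact: (gammaM (a, b)).
- move=> sab; apply: (maxM (fun p => sigma p.1 p.2) Psigma _ (a, b) sab).
  by move=> [x y]; apply: Msigma.
Qed.

Lemma maximal_admissible_total (tau : A -> A -> Prop) : quasiorder alpha ->
  admissible tau ->
  (forall sigma, admissible sigma ->
     (forall a b, tau a b -> sigma a b) -> forall a b, sigma a b -> tau a b) ->
  forall u v, alpha u v -> tau u v \/ tau v u.
Proof.
move=> alpha_qo [tau_qo tau_alpha tau_gamma] maxtau u v auv.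
have [|nvu] := pselect (tau v u); [by right | left].
apply: (maxtau (adjoin tau u v)); last exact: adjoin_pair.
- split; first exact: quasiorder_adjoin.
  + exact: adjoin_sub.
  + move=> a b ab ba.
    by have [] := adjoin_sym tau_qo nvu ab ba; apply: tau_gamma.
- by move=> a b; left.
Qed.

End Admissible.

Lemma half_space_of_total_sub (A : Type) (alpha tau : A -> A -> Prop) :
  half_space alpha -> quasiorder tau -> (forall a b, tau a b -> alpha a b) ->
  (forall u v, alpha u v -> tau u v \/ tau v u) -> half_space tau.
Proof.
move=> [_ [beta [[_ beta_trans] [alpha_beta_total alpha_beta_diag]]]] tau_qo
  tau_alpha tau_total.
have [tau_refl tau_trans] := tau_qo.
split; first exact: tau_qo.
exists (fun a b => a = b \/ ~ tau a b); split; [split|split].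
- by move=> a; left.
- move=> x y z [<-|nxy] [<-|nyz]; [by left|by right|by right|].
  have [<-|nxz] := pselect (x = z); [by left | right => txz].
  have beta_xy : beta x y.
    have [axy|//] := alpha_beta_total x y.
    have [/nxy []|tyx] := tau_total _ _ axy.
    by case: nyz; apply: tau_trans tyx txz.
  have beta_yz : beta y z.
    have [ayz|//] := alpha_beta_total y z.
    have [/nyz []|tzy] := tau_total _ _ ayz.
    by case: nxy; apply: tau_trans txz tzy.
  apply/nxz/alpha_beta_diag.
  by split; [apply: tau_alpha | apply: beta_trans beta_yz].
- by move=> a b; have [|] := pselect (tau a b); [left | right; right].
- by move=> a b; split=> [[ab [//|]]|<-]; [|split; [apply: tau_refl | left]].
Qed.

Theorem proposition2p4 (A : Type) (gamma alpha : A -> A -> Prop) :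
  quasiorder gamma ->
  half_space alpha ->
  (forall a b, gamma a b -> alpha a b) ->
  exists tau : A -> A -> Prop,
    half_space tau /\
    (forall a b, gamma a b -> tau a b) /\
    (forall a b, tau a b -> alpha a b) /\
    (forall a b, (tau a b /\ tau b a) <-> (gamma a b /\ gamma b a)).
Proof.
move=> gamma_qo alpha_hs gamma_alpha.
have [tau [tau_adm gamma_tau tau_max]] :=
  exists_maximal_admissible gamma_qo gamma_alpha.
have [tau_qo tau_alpha tau_gamma] := tau_adm.
have tau_total := maximal_admissible_total alpha_hs.1 tau_adm tau_max.
exists tau; split.
  exact: half_space_of_total_sub alpha_hs tau_qo tau_alpha tau_total.
split=> //; split=> // a b; split.
- by move=> [ab ba]; split; apply: tau_gamma.
- by move=> [ab ba]; split; apply: gamma_tau.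
Qed.
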